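(* Let $\varepsilon>0$, $W(x)=(x^2-1)^2$, and let $u(t)$ be the solution of the graph Allen–Cahn equation $$\dot u_i=-(\Delta u)_i-\frac1\varepsilon d_i^{-r}W'(u_i)\quad(i\in V,\ t>0)$$ with arbitrary initial condition $u(0)=u_0\in\mathcal V$. Let $\mathcal S=\{u\in\mathcal V:\|u\|_{\mathcal V}^2\le\frac{17}{4}n\,d_+^r\}$. Then $t\mapsto\|u(t)\|_{\mathcal V}^2$ is strictly decreasing at every $t$ with $u(t)\notin\mathcal S$. Consequently $\mathcal S$ is positively invariant, and every trajectory enters $\mathcal S$ in finite time.
   Context: $G=(V,E)$ is a finite undirected weighted graph with $n$ nodes $V=\{1,\dots,n\}$. The weights satisfy $\omega_{ij}=\omega_{ji}\ge0$, with $\omega_{ij}>0$ iff $\{i,j\}\in E$, and $\omega_{ii}=0$. The degrees are $d_i=\sum_j\omega_{ij}>0$, and $d_+=\max_id_i$. A parameter $r\in[0,1]$ is fixed. $\mathcal V$ is the space of functions $V\to\mathbb R$ with $\langle u,v\rangle_{\mathcal V}=\sum_iu_iv_id_i^r$ and $\|u\|_{\mathcal V}=\sqrt{\langle u,u\rangle_{\mathcal V}}$. The graph Laplacian is $(\Delta u)_i=d_i^{-r}\sum_j\omega_{ij}(u_i-u_j)$. *)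

From Stdlib Require Import Reals Lra Lia.
Open Scope R_scope.

(* Nodes are indexed 0..n-1 (corresponding to 1..n in the paper). *)
Fixpoint rsum (k : nat) (f : nat -> R) : R :=
  match k with
  | O => 0
  | S k' => rsum k' f + f k'
  end.

(* maximum of f 0, ..., f (k-1), with 0 for k = 0 (degrees are positive, so
   for n >= 1 this is the true maximum) *)
Fixpoint rmaxn (k : nat) (f : nat -> R) : R :=
  match k with
  | O => 0
  | S k' => Rmax (rmaxn k' f) (f k')
  end.

Definition deg (n : nat) (w : nat -> nat -> R) (i : nat) : R :=
  rsum n (fun j => w i j).

Definition dplus (n : nat) (w : nat -> nat -> R) : R :=
  rmaxn n (deg n w).

Definition weighted_graph (n : nat) (w : nat -> nat -> R) : Prop :=
  (forall i j, (i < n)%nat -> (j < n)%nat -> w i j = w j i) /\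
  (forall i j, (i < n)%nat -> (j < n)%nat -> 0 <= w i j) /\
  (forall i, (i < n)%nat -> w i i = 0) /\
  (forall i, (i < n)%nat -> 0 < deg n w i).

Definition normV2 (n : nat) (w : nat -> nat -> R) (r : R) (u : nat -> R) : R :=
  rsum n (fun i => u i * u i * Rpower (deg n w i) r).

Definition graphLap (n : nat) (w : nat -> nat -> R) (r : R) (u : nat -> R) (i : nat) : R :=
  Rpower (deg n w i) (- r) * rsum n (fun j => w i j * (u i - u j)).

(* W(x) = (x^2-1)^2, W'(x) = 4 x (x^2 - 1) *)
Definition Wdw (x : R) : R := 4 * x * (x * x - 1).

Definition AC_rhs (n : nat) (w : nat -> nat -> R) (r eps : R) (u : nat -> R) (i : nat) : R :=
  - graphLap n w r u i - / eps * Rpower (deg n w i) (- r) * Wdw (u i).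

Definition is_AC_solution (n : nat) (w : nat -> nat -> R) (r eps : R)
    (u0 : nat -> R) (u : R -> nat -> R) : Prop :=
  (forall i, (i < n)%nat -> u 0 i = u0 i) /\
  (forall i, (i < n)%nat -> forall t, 0 <= t ->
     forall e, 0 < e -> exists d, 0 < d /\
       forall s, 0 <= s -> Rabs (s - t) < d -> Rabs (u s i - u t i) < e) /\
  (forall i, (i < n)%nat -> forall t, 0 < t ->
     derivable_pt_lim (fun s => u s i) t (AC_rhs n w r eps (u t) i)).

Definition inS (n : nat) (w : nat -> nat -> R) (r : R) (u : nat -> R) : Prop :=
  normV2 n w r u <= 17 / 4 * INR n * Rpower (dplus n w) r.

(* Write N(t) = ||u(t)||_V^2.  Along the flow N is differentiable with
   N' = -2 E(u) - (2/eps) sum_i u_i W'(u_i), where E(u) = sum_i u_i (sum_j w_ij (u_i - u_j))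
   is half the Dirichlet energy, hence nonnegative by symmetry of the weights.
   The pointwise bound x W'(x) >= 8 x^2 - 9 (equivalent to (2x^2 - 3)^2 >= 0) and
   ||u||_V^2 <= d_+^r sum_i u_i^2 show that N' < -50/eps whenever u(t) lies outside S. *)

From Stdlib Require Import Reals Lra Lia Psatz Classical.
Open Scope R_scope.

Lemma rsum_ext k f g : (forall i, (i < k)%nat -> f i = g i) -> rsum k f = rsum k g.
Proof.
  induction k as [|k IH]; simpl; intros H; auto.
  rewrite IH by (intros; apply H; lia). now rewrite H by lia.
Qed.

Lemma rsum_plus k f g : rsum k (fun i => f i + g i) = rsum k f + rsum k g.
Proof. induction k as [|k IH]; simpl; [ring|]. rewrite IH; ring. Qed.

Lemma rsum_scal k c f : rsum k (fun i => c * f i) = c * rsum k f.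
Proof. induction k as [|k IH]; simpl; [ring|]. rewrite IH; ring. Qed.

Lemma rsum_const k c : rsum k (fun _ => c) = INR k * c.
Proof. induction k as [|k IH]; cbn [rsum]; [simpl; ring|]. rewrite IH, S_INR; ring. Qed.

Lemma rsum_le k f g : (forall i, (i < k)%nat -> f i <= g i) -> rsum k f <= rsum k g.
Proof.
  induction k as [|k IH]; simpl; intros H; [lra|].
  assert (rsum k f <= rsum k g) by (apply IH; intros; apply H; lia).
  pose proof (H k (Nat.lt_succ_diag_r k)); lra.
Qed.

Lemma rsum_nonneg k f : (forall i, (i < k)%nat -> 0 <= f i) -> 0 <= rsum k f.
Proof.
  intros H. replace 0 with (rsum k (fun _ => 0)) by (rewrite rsum_const; ring).
  now apply rsum_le.
Qed.

Lemma rsum_swap n m (f : nat -> nat -> R) :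
  rsum n (fun i => rsum m (fun j => f i j)) = rsum m (fun j => rsum n (fun i => f i j)).
Proof.
  induction n as [|n IH]; simpl.
  - rewrite rsum_const; simpl; ring.
  - rewrite IH, <- rsum_plus; reflexivity.
Qed.

Lemma rmaxn_ge k f i : (i < k)%nat -> f i <= rmaxn k f.
Proof.
  induction k as [|k IH]; simpl; intros H; [lia|].
  destruct (Nat.eq_dec i k) as [->|Hne]; [apply Rmax_r|].
  eapply Rle_trans; [apply IH; lia | apply Rmax_l].
Qed.

Lemma rsum_deriv k (F : nat -> R -> R) (F' : nat -> R) t :
  (forall i, (i < k)%nat -> derivable_pt_lim (F i) t (F' i)) ->
  derivable_pt_lim (fun s => rsum k (fun i => F i s)) t (rsum k F').
Proof.
  induction k as [|k IH]; simpl; intros H.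
  - apply derivable_pt_lim_const.
  - apply (derivable_pt_lim_plus (fun s => rsum k (fun i => F i s)) (F k));
      [apply IH; intros|]; apply H; lia.
Qed.

Lemma rsum_cont k (F : nat -> R -> R) t :
  (forall i, (i < k)%nat -> continuity_pt (F i) t) ->
  continuity_pt (fun s => rsum k (fun i => F i s)) t.
Proof.
  induction k as [|k IH]; simpl; intros H.
  - apply continuity_pt_const; intros x y; reflexivity.
  - apply (continuity_pt_plus (fun s => rsum k (fun i => F i s)) (F k));
      [apply IH; intros|]; apply H; lia.
Qed.

Lemma sq_deriv g a c t : derivable_pt_lim g t a ->
  derivable_pt_lim (fun s => g s * g s * c) t (2 * g t * a * c).
Proof.
  intros Hg.
  pose proof (derivable_pt_lim_mult _ _ _ _ _ (derivable_pt_lim_mult _ _ _ _ _ Hg Hg)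
                (derivable_pt_lim_const c t)) as H.
  replace (2 * g t * a * c) with ((a * g t + g t * a) * c + g t * g t * 0) by ring.
  exact H.
Qed.

Lemma sq_cont g c t : continuity_pt g t -> continuity_pt (fun s => g s * g s * c) t.
Proof.
  intros Hg.
  exact (continuity_pt_mult _ _ _ (continuity_pt_mult _ _ _ Hg Hg)
           (continuity_pt_const (fct_cte c) t (fun x y => eq_refl))).
Qed.

(* Continuity on the half-line [0,oo), in the one-sided form used by
   [is_AC_solution]; it is transferred to ordinary continuity by clamping the
   argument with [Rmax 0], so that the library lemmas on [continuity_pt] apply. *)

Definition cont_on_nonneg (g : R -> R) : Prop :=
  forall t, 0 <= t -> forall e, 0 < e -> exists d, 0 < d /\
    forall s, 0 <= s -> Rabs (s - t) < d -> Rabs (g s - g t) < e.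

Lemma Rmax0_dist x t : 0 <= t -> Rabs (Rmax 0 x - t) <= Rabs (x - t).
Proof.
  intros Ht. unfold Rmax. destruct (Rle_dec 0 x); [lra|].
  unfold Rabs; destruct (Rcase_abs (0 - t)), (Rcase_abs (x - t)); lra.
Qed.

Lemma cont_on_nonneg_clamp g t : cont_on_nonneg g -> 0 <= t ->
  continuity_pt (fun s => g (Rmax 0 s)) t.
Proof.
  intros Hg Ht e He. destruct (Hg t Ht e He) as [d [Hd Hs]].
  exists d; split; [lra|]. intros x [_ Hx]; simpl in *; unfold R_dist in *.
  rewrite (Rmax_right 0 t Ht). apply Hs; [apply Rmax_l|].
  eapply Rle_lt_trans; [apply Rmax0_dist|]; eauto.
Qed.

Lemma clamp_cont_on_nonneg g :
  (forall t, 0 <= t -> continuity_pt (fun s => g (Rmax 0 s)) t) -> cont_on_nonneg g.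
Proof.
  intros Hg t Ht e He. destruct (Hg t Ht e He) as [d [Hd Hy]].
  exists d; split; [lra|]. intros s Hs Hst.
  assert (Hclamp : forall x, 0 <= x -> Rmax 0 x = x) by (intros; apply Rmax_right; lra).
  destruct (Req_dec t s) as [<-|Hne].
  - unfold Rminus; rewrite Rplus_opp_r, Rabs_R0; lra.
  - specialize (Hy s (conj (conj I Hne) Hst)); simpl in Hy; unfold R_dist in Hy.
    now rewrite !Hclamp in Hy.
Qed.

Section Lyapunov.

Variables (f f' : R -> R) (C c : R).
Hypothesis f_cont : cont_on_nonneg f.
Hypothesis f_deriv : forall t, 0 < t -> derivable_pt_lim f t (f' t).
Hypothesis c_pos : 0 < c.
Hypothesis f_decay : forall t, 0 < t -> C < f t -> f' t < - c.

Lemma decrease_above_level a b : 0 < a < b ->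
  (forall x, a < x < b -> C < f x) -> f b <= f a - c * (b - a).
Proof.
  intros Hab Habove.
  destruct (MVT_cor2 f f' a b) as [x [Hx Hxab]]; [lra| |].
  - intros x Hx; apply f_deriv; lra.
  - pose proof (f_decay x ltac:(lra) (Habove x Hxab)).
    assert (f' x * (b - a) <= - c * (b - a)) by (apply Rmult_le_compat_r; lra).
    lra.
Qed.

Lemma last_time_below t0 t : 0 <= t0 <= t -> f t0 <= C ->
  exists s, t0 <= s <= t /\ f s <= C /\ forall x, s < x <= t -> C < f x.
Proof.
  intros Ht Hf0.
  set (E := fun x => t0 <= x <= t /\ f x <= C).
  destruct (completeness E) as [s [Hub Hlub]].
  - exists t; intros x [Hx _]; lra.
  - exists t0; split; [lra | exact Hf0].
  - assert (Hs0 : t0 <= s) by (apply Hub; split; [lra | exact Hf0]).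
    assert (Hst : s <= t) by (apply Hlub; intros x [Hx _]; lra).
    exists s; split; [lra|split].
    + (* if f s > C, continuity keeps f > C near s, so s is not the supremum *)
      apply Rnot_lt_le; intro Hgt.
      destruct (f_cont s ltac:(lra) (f s - C) ltac:(lra)) as [d [Hd Hnear]].
      assert (s <= s - d); [|lra].
      apply Hlub; intros x [Hx Hfx].
      destruct (Rle_dec x (s - d)) as [|Hfar]; [assumption|exfalso].
      assert (x <= s) by (apply Hub; split; assumption).
      assert (Hxs : Rabs (x - s) < d) by (unfold Rabs; destruct (Rcase_abs (x - s)); lra).
      specialize (Hnear x ltac:(lra) Hxs).
      unfold Rabs in Hnear; destruct (Rcase_abs _) in Hnear; lra.
    + intros x Hx. apply Rnot_le_lt; intro Hfx.
      assert (x <= s) by (apply Hub; split; [lra | exact Hfx]); lra.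
Qed.

Lemma sublevel_invariant t0 t : 0 <= t0 <= t -> f t0 <= C -> f t <= C.
Proof.
  intros Ht Hf0. apply Rnot_lt_le; intro Hft.
  destruct (last_time_below t0 t Ht Hf0) as [s [Hs [Hfs Hafter]]].
  assert (Hst : s < t) by (destruct (Req_dec s t) as [->|]; lra).
  (* times s' just after s have f s' < f t by continuity at s ... *)
  destruct (f_cont s ltac:(lra) (f t - C) ltac:(lra)) as [d [Hd Hnear]].
  set (s' := s + Rmin d (t - s) / 2).
  assert (0 < Rmin d (t - s) <= d /\ Rmin d (t - s) <= t - s)
    by (split; [split; [apply Rmin_glb_lt|apply Rmin_l]|apply Rmin_r]; lra).
  assert (Hs's : Rabs (s' - s) < d) by (unfold s', Rabs; destruct (Rcase_abs _); lra).
  specialize (Hnear s' ltac:(unfold s'; lra) Hs's).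
  (* ... but f decreases on (s', t), where it is above C *)
  assert (Hdec : f t <= f s' - c * (t - s')).
  { apply decrease_above_level; [unfold s'; lra|].
    intros x Hx; apply Hafter; unfold s' in *; lra. }
  assert (0 < c * (t - s')) by (apply Rmult_lt_0_compat; unfold s'; lra).
  unfold Rabs in Hnear; destruct (Rcase_abs _) in Hnear; lra.
Qed.

(* A nonnegative f reaches the sublevel set in finite time: above C it would
   become negative after time 2 + f(1)/c. *)
Lemma sublevel_reached : (forall t, 0 <= t -> 0 <= f t) -> exists T, 0 <= T /\ f T <= C.
Proof.
  intros Hnonneg. apply NNPP; intro Hnever.
  assert (Habove : forall t, 0 <= t -> C < f t).
  { intros t Ht; apply Rnot_le_lt; intro Hft; apply Hnever; exists t; auto. }
  set (T := 2 + f 1 / c).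
  assert (0 <= f 1 / c) by (apply Rmult_le_pos; [apply Hnonneg; lra | left; apply Rinv_0_lt_compat; lra]).
  assert (Hdec : f T <= f 1 - c * (T - 1)).
  { apply decrease_above_level; [unfold T; lra|]. intros x Hx; apply Habove; lra. }
  assert (c * (T - 1) = c + f 1) by (unfold T; field; lra).
  pose proof (Hnonneg T ltac:(unfold T; lra)); lra.
Qed.

End Lyapunov.

Definition norm_rate n w r eps (v : nat -> R) : R :=
  rsum n (fun i => 2 * v i * AC_rhs n w r eps v i * Rpower (deg n w i) r).

Lemma normV2_nonneg n w r v : 0 <= normV2 n w r v.
Proof.
  apply rsum_nonneg; intros i _.
  assert (0 < Rpower (deg n w i) r) by (unfold Rpower; apply exp_pos).
  assert (0 <= v i * v i) by nra. nra.
Qed.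

Lemma normV2_deriv n w r eps u0 u t : is_AC_solution n w r eps u0 u -> 0 < t ->
  derivable_pt_lim (fun s => normV2 n w r (u s)) t (norm_rate n w r eps (u t)).
Proof.
  intros [_ [_ Hode]] Ht.
  apply (rsum_deriv n (fun i s => u s i * u s i * Rpower (deg n w i) r)).
  intros i Hi; apply (sq_deriv (fun s => u s i)); auto.
Qed.

Lemma normV2_cont n w r eps u0 u : is_AC_solution n w r eps u0 u ->
  cont_on_nonneg (fun s => normV2 n w r (u s)).
Proof.
  intros [_ [Hcont _]]. apply clamp_cont_on_nonneg; intros t Ht.
  apply (rsum_cont n (fun i s => u (Rmax 0 s) i * u (Rmax 0 s) i * Rpower (deg n w i) r)).
  intros i Hi; apply (sq_cont (fun s => u (Rmax 0 s) i)).
  apply (cont_on_nonneg_clamp (fun s => u s i)); [exact (Hcont i Hi) | exact Ht].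
Qed.

(* sum_i v_i (sum_j w_ij (v_i - v_j)) = (1/2) sum_ij w_ij (v_i - v_j)^2 >= 0
   for symmetric nonnegative weights. *)
Lemma dirichlet_nonneg n (w : nat -> nat -> R) (v : nat -> R) :
  (forall i j, (i < n)%nat -> (j < n)%nat -> w i j = w j i) ->
  (forall i j, (i < n)%nat -> (j < n)%nat -> 0 <= w i j) ->
  0 <= rsum n (fun i => v i * rsum n (fun j => w i j * (v i - v j))).
Proof.
  intros Hsym Hpos.
  set (X := rsum n (fun i => v i * rsum n (fun j => w i j * (v i - v j)))).
  assert (HX1 : X = rsum n (fun i => rsum n (fun j => w i j * v i * (v i - v j)))).
  { unfold X; apply rsum_ext; intros i Hi.
    rewrite <- rsum_scal; apply rsum_ext; intros; ring. }
  assert (HX2 : X = rsum n (fun i => rsum n (fun j => w i j * v j * (v j - v i)))).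
  { rewrite HX1, rsum_swap; apply rsum_ext; intros i Hi; apply rsum_ext; intros j Hj.
    now rewrite Hsym. }
  assert (Hsq : X + X = rsum n (fun i => rsum n (fun j => w i j * (v i - v j) ^ 2))).
  { rewrite HX1 at 1; rewrite HX2, <- rsum_plus; apply rsum_ext; intros i Hi.
    rewrite <- rsum_plus; apply rsum_ext; intros; ring. }
  assert (0 <= X + X); [|lra].
  rewrite Hsq; apply rsum_nonneg; intros i Hi; apply rsum_nonneg; intros j Hj.
  apply Rmult_le_pos; [auto | apply pow2_ge_0].
Qed.

(* x W'(x) >= 8 x^2 - 9, i.e. (2 x^2 - 3)^2 >= 0. *)
Lemma Wdw_lower x : 8 * (x * x) - 9 <= x * Wdw x.
Proof. unfold Wdw. pose proof (pow2_ge_0 (2 * x * x - 3)). nra. Qed.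

Lemma Rpower_opp_mul x r : 0 < x -> Rpower x (- r) * Rpower x r = 1.
Proof.
  intros Hx. rewrite <- Rpower_plus. replace (- r + r) with 0 by ring.
  now apply Rpower_O.
Qed.

(* The weights d_i^{-r} of the equation cancel the weights d_i^r of the norm. *)
Lemma norm_rate_eq n w r eps v : weighted_graph n w -> 0 < eps ->
  norm_rate n w r eps v =
    - 2 * rsum n (fun i => v i * rsum n (fun j => w i j * (v i - v j)))
    - 2 / eps * rsum n (fun i => v i * Wdw (v i)).
Proof.
  intros (_ & _ & _ & Hdeg) He. unfold norm_rate.
  transitivity (rsum n (fun i => - 2 * (v i * rsum n (fun j => w i j * (v i - v j)))
                                 + - (2 / eps) * (v i * Wdw (v i))));
    [| rewrite rsum_plus, !rsum_scal; ring].
  apply rsum_ext; intros i Hi. unfold AC_rhs, graphLap.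
  pose proof (Rpower_opp_mul (deg n w i) r (Hdeg i Hi)) as Hcancel.
  set (L := rsum n (fun j => w i j * (v i - v j))).
  set (a := Rpower (deg n w i) (- r)) in *; set (b := Rpower (deg n w i) r) in *.
  transitivity (2 * v i * (- L - / eps * Wdw (v i)) * (a * b)); [ring|].
  rewrite Hcancel; field; lra.
Qed.

(* ||v||_V^2 <= d_+^r sum_i v_i^2, since d_i <= d_+ and r >= 0. *)
Lemma normV2_le_dplus n w r v : weighted_graph n w -> 0 <= r ->
  normV2 n w r v <= Rpower (dplus n w) r * rsum n (fun i => v i * v i).
Proof.
  intros (_ & _ & _ & Hdeg) Hr. rewrite <- rsum_scal. apply rsum_le; intros i Hi.
  assert (Rpower (deg n w i) r <= Rpower (dplus n w) r)
    by (apply Rle_Rpower_l; [| split; [| apply rmaxn_ge]]; auto).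
  assert (0 <= v i * v i) by nra. nra.
Qed.

Lemma norm_rate_outside_S n w r eps v : weighted_graph n w -> 0 <= r -> 0 < eps ->
  ~ inS n w r v -> norm_rate n w r eps v < - 50 / eps.
Proof.
  intros Hw Hr He Hout. pose proof Hw as (Hsym & Hpos & _).
  rewrite norm_rate_eq by auto.
  pose proof (dirichlet_nonneg n w v Hsym Hpos).
  pose proof (normV2_le_dplus n w r v Hw Hr) as Hbound.
  apply Rnot_le_lt in Hout.
  set (S2 := rsum n (fun i => v i * v i)) in *.
  set (P := Rpower (dplus n w) r) in *.
  assert (HP : 0 < P) by (unfold P, Rpower; apply exp_pos).
  assert (HS2 : 17 / 4 * INR n < S2) by (apply (Rmult_lt_reg_l P); lra).
  assert (Hn : 1 <= INR n).
  { destruct n as [|n']; [unfold S2 in HS2; simpl in HS2; lra|].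
    rewrite S_INR; pose proof (pos_INR n'); lra. }
  (* the double-well term alone exceeds 8 S2 - 9 n > 25 *)
  assert (HY : 25 < rsum n (fun i => v i * Wdw (v i))).
  { assert (8 * S2 - 9 * INR n <= rsum n (fun i => v i * Wdw (v i))); [|nra].
    replace (8 * S2 - 9 * INR n) with (rsum n (fun i => 8 * (v i * v i) + (-1) * 9))
      by (unfold S2; rewrite rsum_plus, rsum_scal, rsum_const; ring).
    apply rsum_le; intros i _; pose proof (Wdw_lower (v i)); lra. }
  assert (2 / eps * 25 < 2 / eps * rsum n (fun i => v i * Wdw (v i)))
    by (apply Rmult_lt_compat_l; [apply Rdiv_lt_0_compat|]; lra).
  assert (- 50 / eps = - (2 / eps * 25)) by (field; lra).
  lra.
Qed.

Theorem mainTheorem16 (n : nat) (w : nat -> nat -> R) (r eps : R)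
  (u0 : nat -> R) (u : R -> nat -> R) :
  weighted_graph n w -> 0 <= r <= 1 -> 0 < eps ->
  is_AC_solution n w r eps u0 u ->
  (* strict decrease of ||u(t)||^2 wherever u(t) is outside S *)
  (forall t, 0 < t -> ~ inS n w r (u t) ->
     exists l, l < 0 /\ derivable_pt_lim (fun s => normV2 n w r (u s)) t l) /\
  (* positive invariance of S *)
  (forall t0, 0 <= t0 -> inS n w r (u t0) -> forall t, t0 <= t -> inS n w r (u t)) /\
  (* finite-time entry into S *)
  (exists T, 0 <= T /\ inS n w r (u T)).
Proof.
  intros Hw Hr He Hsol.
  set (C := 17 / 4 * INR n * Rpower (dplus n w) r).
  assert (Hc : 0 < 50 / eps) by (apply Rdiv_lt_0_compat; lra).
  assert (Hdecay : forall t, 0 < t -> C < normV2 n w r (u t) ->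
                     norm_rate n w r eps (u t) < - (50 / eps)).
  { intros t _ Hout. unfold Rdiv; rewrite Ropp_mult_distr_l.
    apply norm_rate_outside_S; unfold inS; fold C; auto; lra. }
  pose proof (normV2_cont n w r eps u0 u Hsol) as Hcont.
  pose proof (fun t => normV2_deriv n w r eps u0 u t Hsol) as Hderiv.
  split; [|split].
  - intros t Ht Hout. exists (norm_rate n w r eps (u t)); split; [|auto].
    apply Rnot_le_lt in Hout. pose proof (Hdecay t Ht Hout); lra.
  - intros t0 Ht0 Hin t Ht.
    exact (sublevel_invariant _ _ C _ Hcont Hderiv Hc Hdecay t0 t ltac:(lra) Hin).
  - exact (sublevel_reached _ _ C _ Hderiv Hc Hdecay (fun t _ => normV2_nonneg n w r (u t))).
Qed.
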